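(* Let $Q=(q_0,\ldots,q_n)$ be a weights vector and let $\mathbf{v}_0,\ldots,\mathbf{v}_n\in\mathbb{Q}^n$ be vectors generating $\mathbb{Q}^n$ (as a $\mathbb{Q}$-vector space) such that $\sum_{j=0}^n q_j\mathbf{v}_j=0$. Let $L$ be the lattice generated by $\mathbf{v}_0,\ldots,\mathbf{v}_n$ and $L'$ the sublattice generated by $q_0\mathbf{v}_0,\ldots,q_n\mathbf{v}_n$. Then: (a) $[L:L']=\prod_{j=0}^n q_j$; (b) if $\mathbf{e}_1,\ldots,\mathbf{e}_n$ is a basis of $L$, $V=(v_{ij})$ is the $n\times(n+1)$ matrix with $\mathbf{v}_j=\sum_{i=1}^n v_{ij}\mathbf{e}_i$, and $V_j$ denotes the determinant of the matrix obtained from $V$ by deleting its $j$-th column ($0\leq j\leq n$), then there is a fixed $\epsilon\in\{0,1\}$ with $V_j=(-1)^{\epsilon+j}q_j$ for all $j$; (c) for every $j$, $\mathbf{v}_j=d_j\mathbf{n}_j$, where $\mathbf{n}_j$ is the generator of the semigroup $\mathbb{R}_{\geq0}\mathbf{v}_j\cap L$ and $d_j=\gcd(q_0,\ldots,q_{j-1},q_{j+1},\ldots,q_n)$; in particular $L$ is generated by $\mathbf{n}_0,\ldots,\mathbf{n}_n$; moreover $\mathbf{n}_0,\ldots,\mathbf{n}_n$ generate $\mathbb{Q}^n$ and $\sum_{j=0}^n q'_j\mathbf{n}_j=0$, where $Q'=(q'_0,\ldots,q'_n)$ is the reduction of $Q$.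
   Context: A weights vector is an $(n+1)$-tuple $Q=(q_0,\ldots,q_n)$ of positive integers with $\gcd(q_0,\ldots,q_n)=1$. Set $d_j=\gcd(q_0,\ldots,q_{j-1},q_{j+1},\ldots,q_n)$ and $a_j=\mathrm{lcm}(d_0,\ldots,d_{j-1},d_{j+1},\ldots,d_n)$. Then $a_j\mid q_j$, and the reduction of $Q$ is $Q'=(q'_0,\ldots,q'_n)$ with $q'_j=q_j/a_j$. *)

From HB Require Import structures.
From mathcomp Require Import all_boot all_order all_algebra.
Set Implicit Arguments. Unset Strict Implicit. Unset Printing Implicit Defensive.
Import Order.TTheory GRing.Theory Num.Theory.
Local Open Scope ring_scope.

Definition weights_vector (n : nat) (q : 'I_n.+1 -> nat) : Prop :=
  (forall j, (0 < q j)%N) /\ (\big[gcdn/0%N]_(j < n.+1) q j)%N = 1%N.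

Definition dgcd (n : nat) (q : 'I_n.+1 -> nat) (j : 'I_n.+1) : nat :=
  (\big[gcdn/0%N]_(k < n.+1 | k != j) q k)%N.

Definition alcm (n : nat) (q : 'I_n.+1 -> nat) (j : 'I_n.+1) : nat :=
  (\big[lcmn/1%N]_(k < n.+1 | k != j) dgcd q k)%N.

Definition reduction (n : nat) (q : 'I_n.+1 -> nat) (j : 'I_n.+1) : nat :=
  (q j %/ alcm q j)%N.

Definition in_lattice (m n : nat) (w : 'I_m -> 'rV[rat]_n) (x : 'rV[rat]_n)
  : Prop :=
  exists c : 'I_m -> int, x = \sum_(i < m) (c i)%:~R *: w i.

Definition spans_Qn (m n : nat) (w : 'I_m -> 'rV[rat]_n) : Prop :=
  forall x : 'rV[rat]_n, exists c : 'I_m -> rat, x = \sum_(i < m) c i *: w i.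

(* [L : L'] = k : there are exactly k cosets of L' in L, i.e. a list of k
   elements of L, pairwise incongruent mod L', representing every coset. *)
Definition lattice_index (n : nat) (L L' : 'rV[rat]_n -> Prop) (k : nat)
  : Prop :=
  exists s : seq 'rV[rat]_n,
    size s = k /\
    (forall i, (i < size s)%N -> L (nth 0 s i)) /\
    (forall i j, (i < size s)%N -> (j < size s)%N ->
        L' (nth 0 s i - nth 0 s j) -> i = j) /\
    (forall x, L x -> exists2 i, (i < size s)%N & L' (x - nth 0 s i)).

Definition lattice_basis (n : nat) (L : 'rV[rat]_n -> Prop)
  (e : 'I_n -> 'rV[rat]_n) : Prop :=
  (forall x, L x <-> in_lattice e x) /\
  (forall c : 'I_n -> int, \sum_(i < n) (c i)%:~R *: e i = 0 -> forall i, c i = 0).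

(* w is the generator of the semigroup (R_{>=0} v) \cap L.  Since L lies in
   Q^n, a real multiple of v lying in L is a rational multiple (v <> 0) or
   0 (v = 0), so R_{>=0} v \cap L = Q_{>=0} v \cap L. *)
Definition on_ray (n : nat) (v x : 'rV[rat]_n) : Prop :=
  exists2 t : rat, 0 <= t & x = t *: v.

Definition ray_generator (n : nat) (L : 'rV[rat]_n -> Prop)
  (v w : 'rV[rat]_n) : Prop :=
  L w /\ on_ray v w /\
  (forall x, L x -> on_ray v x -> exists k : nat, x = k%:R *: w).

From HB Require Import structures.
From mathcomp Require Import all_boot all_order all_algebra.
From mathcomp Require Import ring.
Set Implicit Arguments. Unset Strict Implicit. Unset Printing Implicit Defensive.
Import Order.TTheory GRing.Theory Num.Theory.
Local Open Scope ring_scope.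

(** Since the v_j span Q^n, their rational relations form a line, which
  contains q; as gcd(q) = 1, every integral relation is an integral multiple
  of q.
  (a) Every element of L is congruent mod L' to exactly one sum
  \sum c_j v_j with 0 <= c_j < q_j: the difference of two such sums, reduced
  by L', is an integral relation, hence lies in L'.
  (b) The signed maximal minors of V form an integral relation, so they equal
  z q.  Writing the basis e in terms of the v_j gives an integral right
  inverse C of V, and det [delta_0; V] * det [q | C] = q_0 forces z = +-1.
  (c) If t v_j lies in L, then t q_k is an integer for all k <> j, hence so
  is t d_j; conversely v_j / d_j lies in L by a Bezout identity for the
  coprime d_j and q_j.  So n_j = v_j / d_j, and dividing \sum q_j v_j = 0
  by lcm_k d_k = d_j a_j gives \sum q'_j n_j = 0. *)

Lemma sum_delta (R : pzRingType) (V : lmodType R) m (f : 'I_m -> V) j :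
  \sum_(k < m) (k == j)%:R *: f k = f j.
Proof.
by rewrite (bigD1 j) //= eqxx scale1r big1 ?addr0 // => k /negbTE ->; rewrite scale0r.
Qed.

Lemma in_lattice_gen m n (w : 'I_m -> 'rV[rat]_n) k : in_lattice w (w k).
Proof. by exists (fun i => (i == k)%:Z); rewrite sum_delta. Qed.

Lemma in_lattice_comb m p n (w : 'I_m -> 'rV[rat]_n) (u : 'I_p -> 'rV[rat]_n)
    (c : 'I_p -> int) :
  (forall k, in_lattice w (u k)) -> in_lattice w (\sum_k (c k)%:~R *: u k).
Proof.
move=> /fin_all_exists [D uD]; exists (fun i => \sum_k c k * D k i).
under eq_bigr => k _ do rewrite uD scaler_sumr.
rewrite exchange_big /=; apply: eq_bigr => i _.
rewrite rmorph_sum /= scaler_suml; apply: eq_bigr => k _.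
by rewrite scalerA rmorphM.
Qed.

Lemma mulr_biggcdn_int (R : archiNumDomainType) (I : finType) (P : pred I)
    (F : I -> nat) (s : R) :
  (forall i, P i -> s * (F i)%:R \is a Num.int) ->
  s * (\big[gcdn/0%N]_(i | P i) F i)%:R \is a Num.int.
Proof.
move=> sF; elim/big_ind: _ => [|x y sx sy|//]; first by rewrite mulr0.
have [u [w uw]] := Bezoutz x y.
have -> : (gcdn x y)%:R = (u * x + w * y)%:~R :> R by rewrite uw.
rewrite rmorphD !rmorphM /= mulrDr [s * (u%:~R * _)]mulrCA [s * (w%:~R * _)]mulrCA.
by rewrite rpredD // rpredM // rpred_int.
Qed.

Lemma ord_eq_of_dvdz m (a b : 'I_m) : (m%:Z %| a%:Z - b%:Z)%Z -> a = b.
Proof.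
rewrite -eqz_mod_dvd !modz_nat !modn_small // => /eqP[ab].
exact: val_inj.
Qed.

Lemma lattice_index_card n (T : finType) (L L' : 'rV[rat]_n -> Prop)
    (f : T -> 'rV[rat]_n) :
  (forall t, L (f t)) -> (forall t t', L' (f t - f t') -> t = t') ->
  (forall x, L x -> exists t, L' (x - f t)) ->
  lattice_index L L' #|T|.
Proof.
move=> Lf f_inj f_cover; exists [seq f t | t <- enum T].
split; first by rewrite size_map cardE.
split=> [i lt_i|]; first by have /mapP[t _ ->] := mem_nth 0 lt_i.
split=> [i j lt_i lt_j|x /f_cover[t ft]].
  have /mapP[t0 _ _] := mem_nth 0 lt_i; rewrite size_map in lt_i lt_j.
  rewrite !(nth_map t0) -?enumT // => /f_inj /eqP.
  by rewrite nth_uniq ?enum_uniq // => /eqP.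
exists (index t (enum T)); first by rewrite size_map index_mem mem_enum.
by rewrite (nth_map t) ?nth_index ?index_mem ?mem_enum.
Qed.

Section SignedMinors.
Variables (R : comPzRingType) (n : nat).
Implicit Types (V : 'M[R]_(n, n.+1)) (r : 'rV[R]_n.+1).

Definition signed_minor V (j : 'I_n.+1) : R := (-1) ^+ j * \det (col' j V).

Lemma row'0_col_mx (p : nat) (A : 'M[R]_(n, p)) (r0 : 'rV[R]_p) :
  row' ord0 (col_mx r0 A : 'M_(1 + n, p)) = A.
Proof.
apply/matrixP => i j; rewrite mxE.
have -> : lift ord0 i = rshift 1 (i : 'I_n) by apply: val_inj.
exact: col_mxEd.
Qed.

Lemma det_col_mx_expand V r :
  \det (col_mx r V : 'M_n.+1) = (r *m \col_j signed_minor V j) 0 0.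
Proof.
rewrite (expand_det_row _ ord0) mxE; apply: eq_bigr => j _.
rewrite /cofactor (col'_col_mx j r V) row'0_col_mx add0n.
have -> : ord0 = lshift n (0 : 'I_1) by apply: val_inj.
by rewrite (col_mxEu r V) mxE.
Qed.

Lemma mulmx_signed_minor V : V *m \col_j signed_minor V j = 0.
Proof.
apply/colP => i; rewrite [RHS]mxE.
transitivity (row i (V *m \col_j signed_minor V j) 0 0); first by rewrite [RHS]mxE.
rewrite row_mul -det_col_mx_expand.
apply: (determinant_alternate (neq_lift ord0 i)) => k.
have -> : lift ord0 i = rshift 1 (i : 'I_n) by apply: val_inj.
have -> : ord0 = lshift n (0 : 'I_1) by apply: val_inj.
by rewrite (col_mxEu (row i V) V) (col_mxEd (row i V) V) mxE.
Qed.

Lemma det_col_mx_mul_row_mx V r (x : 'cV[R]_n.+1) (C : 'M[R]_(n.+1, n)) :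
  V *m x = 0 -> V *m C = 1%:M ->
  \det (col_mx r V : 'M_n.+1) * \det (row_mx x C : 'M_n.+1) = (r *m x) 0 0.
Proof.
move=> Vx VC; rewrite -det_mulmx (mul_col_row r V x C) Vx VC.
by rewrite (det_ublock (r *m x) (r *m C) (1%:M : 'M[R]_n)) det1 mulr1 det_mx11.
Qed.
End SignedMinors.

Section WeightedFamily.
Variables (n : nat) (q : 'I_n.+1 -> nat) (v : 'I_n.+1 -> 'rV[rat]_n).
Hypotheses (q_weights : weights_vector q) (v_span : spans_Qn v)
  (v_rel : \sum_(j < n.+1) (q j)%:R *: v j = 0).

Let q_gt0 : forall j, (0 < q j)%N := q_weights.1.

Lemma weights_common_divisor g : (forall k, (g %| q k)%N) -> g = 1%N.
Proof.
by move=> g_q; apply/eqP; rewrite -dvdn1 -q_weights.2; apply/dvdn_biggcdP.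
Qed.

Lemma relation_propto_weights (w : 'I_n.+1 -> rat) :
  \sum_j w j *: v j = 0 -> exists s : rat, forall j, w j = s * (q j)%:R.
Proof.
move=> w_rel; pose M : 'M[rat]_(n.+1, n) := \matrix_(j, i) v j 0 i.
have mulM (u : 'rV_n.+1) : u *m M = \sum_j u 0 j *: v j.
  rewrite mulmx_sum_row; apply: eq_bigr => j _; congr (_ *: _).
  by apply/rowP => i; rewrite !mxE.
have rankM : \rank M = n.
  apply/eqP; rewrite eqn_leq rank_leq_col -{1}(mxrank1 rat n) mxrankS //.
  apply/row_subP => i; have [c ->] := v_span (row i 1%:M).
  have -> : \sum_j c j *: v j = (\row_j c j) *m M.
    by rewrite mulM; apply: eq_bigr => j _; rewrite mxE.
  exact: submxMl.
pose qr : 'rV[rat]_n.+1 := \row_j (q j)%:R.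
have qr_ker : (qr <= kermx M)%MS.
  by apply/sub_kermxP; rewrite mulM -[RHS]v_rel; apply: eq_bigr => j _; rewrite mxE.
have qr_neq0 : qr != 0.
  apply/eqP => /rowP /(_ ord0); rewrite !mxE => /eqP.
  by rewrite pnatr_eq0 gtn_eqF.
have ker_qr : (qr == kermx M)%MS.
  by rewrite -(mxrank_leqif_eq qr_ker) mxrank_ker rankM rank_rV qr_neq0 subSnn.
have : (\row_j w j <= qr)%MS.
  rewrite (eqmxP ker_qr); apply/sub_kermxP; rewrite mulM -[RHS]w_rel.
  by apply: eq_bigr => j _; rewrite mxE.
by case/sub_rVP => s /rowP ws; exists s => j; have := ws j; rewrite !mxE.
Qed.

Lemma int_relation_propto_weights (c : 'I_n.+1 -> int) :
  \sum_j (c j)%:~R *: v j = 0 -> exists z : int, forall j, c j = z * (q j)%:Z.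
Proof.
move=> /relation_propto_weights[s cs].
have : s * (\big[gcdn/0%N]_(j < n.+1) q j)%:R \is a Num.int.
  by apply: mulr_biggcdn_int => j _; rewrite -cs rpred_int.
rewrite q_weights.2 mulr1 => /intrP[z sz]; exists z => j.
by apply: (@intr_inj rat); rewrite cs sz rmorphM.
Qed.

Lemma lattice_index_weights :
  lattice_index (in_lattice v) (in_lattice (fun j => (q j)%:R *: v j))
    (\prod_(j < n.+1) q j)%N.
Proof.
pose T := {dffun forall j : 'I_n.+1, 'I_(q j)}.
pose f (c : T) := \sum_j ((c j : nat)%:Z)%:~R *: v j.
have -> : (\prod_j q j)%N = #|T|.
  rewrite card_dep_ffun foldrE big_map big_enum /=.
  by apply: eq_bigr => j _; rewrite card_ord.
apply: (@lattice_index_card _ _ _ _ f) => [c|c c' [d cd]|_ [c ->]].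
- by exists (fun j => (c j : nat)%:Z).
- have rel : \sum_j ((c j : nat)%:Z - (c' j : nat)%:Z - d j * (q j)%:Z)%:~R
               *: v j = 0.
    transitivity (f c - f c' - \sum_j (d j)%:~R *: ((q j)%:R *: v j));
      last by rewrite cd subrr.
    rewrite /f -!sumrB; apply: eq_bigr => j _.
    by rewrite !rmorphB rmorphM /= !scalerBl scalerA.
  have [z cz] := int_relation_propto_weights rel.
  apply/ffunP => j; apply/ord_eq_of_dvdz/dvdzP; exists (d j + z).
  by rewrite mulrDl -cz [RHS]addrC subrK.
- have q_neq0 j : (q j)%:Z != 0 by rewrite -natz pnatr_eq0 -lt0n q_gt0.
  have mod_lt j : (`|(c j %% (q j)%:Z)%Z|%N < q j)%N.
    by rewrite -ltz_nat gez0_abs ?modz_ge0 ?ltz_pmod // -natz ltr0n.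
  exists [ffun j => Ordinal (mod_lt j)].
  exists (fun j => (c j %/ (q j)%:Z)%Z); rewrite /f -sumrB.
  apply: eq_bigr => j _; rewrite ffunE /= gez0_abs ?modz_ge0 //.
  rewrite scalerA -scalerBl -[(q j)%:R]/(((q j)%:Z)%:~R : rat) -rmorphM.
  by rewrite -rmorphB /= {1}(divz_eq (c j) (q j)) addrK.
Qed.

Section LatticeBasis.
Variables (e : 'I_n -> 'rV[rat]_n) (V : 'M[int]_(n, n.+1)).
Hypotheses (e_basis : lattice_basis (in_lattice v) e)
  (v_coord : forall j, v j = \sum_(i < n) (V i j)%:~R *: e i).

Lemma sum_v_coord (w : 'I_n.+1 -> int) :
  \sum_j (w j)%:~R *: v j = \sum_i ((V *m \col_j w j) i 0)%:~R *: e i.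
Proof.
under eq_bigr => j _ do rewrite v_coord scaler_sumr.
rewrite exchange_big /=; apply: eq_bigr => i _.
rewrite mxE rmorph_sum /= scaler_suml; apply: eq_bigr => j _.
by rewrite mxE scalerA rmorphM mulrC.
Qed.

Lemma relation_mulmx_eq0 (w : 'I_n.+1 -> int) :
  \sum_j (w j)%:~R *: v j = 0 -> V *m \col_j w j = 0.
Proof.
rewrite sum_v_coord => /e_basis.2 Vw0.
by apply/colP => i; rewrite Vw0 mxE.
Qed.

Lemma mulmx_right_inverse : exists C : 'M[int]_(n.+1, n), V *m C = 1%:M.
Proof.
have /fin_all_exists[c e_c] k :
    exists c : 'I_n.+1 -> int, e k = \sum_j (c j)%:~R *: v j.
  by apply/e_basis.1/in_lattice_gen.
exists (\matrix_(j, k) c k j); apply/matrixP => i k.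
have -> : (V *m \matrix_(j, k) c k j) i k = (V *m \col_j c k j) i 0.
  by rewrite !mxE; apply: eq_bigr => j _; rewrite !mxE.
rewrite [1%:M i k]mxE natz; apply/eqP; rewrite -subr_eq0; apply/eqP; move: i.
apply: e_basis.2; under eq_bigr => i _ do rewrite rmorphB scalerBl.
by rewrite sumrB -sum_v_coord -e_c sum_delta subrr.
Qed.

Lemma signed_minor_weights :
  exists eps : bool, forall j, signed_minor V j = (-1) ^+ eps * (q j)%:Z.
Proof.
have [z mz] : exists z : int, forall j, signed_minor V j = z * (q j)%:Z.
  apply: int_relation_propto_weights.
  by rewrite sum_v_coord mulmx_signed_minor big1 // => i _; rewrite mxE scale0r.
have [C VC] := mulmx_right_inverse.
have Vq : V *m \col_j (q j)%:Z = 0 by apply: relation_mulmx_eq0.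
have := det_col_mx_mul_row_mx (delta_mx 0 0) Vq VC.
rewrite det_col_mx_expand -!rowE !mxE mz => zq.
have zD : \det (row_mx (\col_j (q j)%:Z) C : 'M_n.+1) * z = 1.
  apply: (@mulIf _ (q 0)%:Z); first by rewrite eqz_nat gtn_eqF.
  by rewrite mul1r -[RHS]zq; ring.
have := intUnitRing.unitzPl zD; rewrite qualifE /= => /orP[] /eqP z_sign.
  by exists false => j; rewrite mz z_sign.
by exists true => j; rewrite mz z_sign.
Qed.

Lemma det_col'_weights :
  exists eps : bool, forall j : 'I_n.+1,
    \det (col' j V) = (-1) ^+ (eps + j) * (q j)%:Z.
Proof.
have [eps sm] := signed_minor_weights; exists eps => j.
by rewrite exprD [(-1) ^+ eps * _]mulrC -mulrA -sm signrMK.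
Qed.

End LatticeBasis.

Lemma dgcd_dvdn j k : k != j -> (dgcd q j %| q k)%N.
Proof. by move=> kj; apply: (biggcdn_inf k). Qed.

Lemma coprime_dgcd j : coprime (dgcd q j) (q j).
Proof.
apply/eqP/weights_common_divisor => k.
have [->|kj] := eqVneq k j; first exact: dvdn_gcdr.
exact: dvdn_trans (dvdn_gcdl _ _) (dgcd_dvdn kj).
Qed.

Lemma alcm_dvdn j : (alcm q j %| q j)%N.
Proof. by apply/dvdn_biglcmP => k kj; apply: dgcd_dvdn; rewrite eq_sym. Qed.

Lemma alcm_gt0 j : (0 < alcm q j)%N.
Proof. exact: dvdn_gt0 (q_gt0 j) (alcm_dvdn j). Qed.

Lemma biglcmn_dgcd j :
  (\big[lcmn/1%N]_(k < n.+1) dgcd q k)%N = (dgcd q j * alcm q j)%N.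
Proof.
have := muln_lcm_gcd (dgcd q j) (alcm q j).
rewrite (eqP (coprime_dvdr (alcm_dvdn j) (coprime_dgcd j))) muln1 => <-.
by rewrite (bigD1 j).
Qed.

Section PositiveDimension.
Hypothesis n_gt0 : (0 < n)%N.

Let other (j : 'I_n.+1) : 'I_n.+1 := lift j (Ordinal n_gt0).
Let other_neq (j : 'I_n.+1) : other j != j. Proof. by rewrite eq_sym neq_lift. Qed.

Lemma dgcd_gt0 j : (0 < dgcd q j)%N.
Proof. exact: dvdn_gt0 (q_gt0 (other j)) (dgcd_dvdn (other_neq j)). Qed.

Let dgcd_neq0 j : (dgcd q j)%:R != 0 :> rat.
Proof. by rewrite pnatr_eq0 -lt0n dgcd_gt0. Qed.

Lemma v_neq0 j : v j != 0.
Proof.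
apply/eqP => vj0.
have [s qs] : exists s : rat, forall k, (k == j)%:R = s * (q k)%:R.
  by apply: relation_propto_weights; rewrite sum_delta.
have := qs (other j); rewrite (negbTE (other_neq j)) => /esym/eqP.
rewrite mulf_eq0 pnatr_eq0 eqn0Ngt q_gt0 orbF => /eqP s0.
by have := qs j; rewrite eqxx s0 mul0r => /eqP; rewrite oner_eq0.
Qed.

Lemma in_lattice_ray j (t : rat) :
  in_lattice v (t *: v j) -> t * (dgcd q j)%:R \is a Num.int.
Proof.
move=> [c tc].
have rel : \sum_k ((c k)%:~R - (k == j)%:R * t) *: v k = 0.
  under eq_bigr => k _ do rewrite scalerBl -scalerA.
  by rewrite sumrB sum_delta tc subrr.
have [s cs] := relation_propto_weights rel.
have s_dgcd : s * (dgcd q j)%:R \is a Num.int.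
  apply: mulr_biggcdn_int => k kj.
  by rewrite -cs (negbTE kj) mul0r subr0 rpred_int.
have -> : t = (c j)%:~R - s * (q j)%:R by rewrite -cs eqxx mul1r subKr.
by rewrite mulrBl mulrAC rpredB // rpredM // ?rpred_int ?natr_int.
Qed.

Lemma in_lattice_v_div_dgcd j : in_lattice v ((dgcd q j)%:R^-1 *: v j).
Proof.
have [u [w uw]] := Bezoutz (dgcd q j) (q j).
have uw1 : u%:~R * (dgcd q j)%:R + w%:~R * (q j)%:R = 1 :> rat.
  have : (u * (dgcd q j)%:Z + w * (q j)%:Z)%:~R = 1 :> rat.
    by rewrite uw /gcdz /= (eqP (coprime_dgcd j)).
  by rewrite rmorphD !rmorphM.
have others : \sum_(k | k != j) (q k)%:R *: v k = - ((q j)%:R *: v j).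
  by move: v_rel; rewrite (bigD1 j) //= addrC => /eqP; rewrite addr_eq0 => /eqP.
exists (fun k => if k == j then u else - (w * (q k %/ dgcd q j)%:R)).
rewrite (bigD1 j) //= eqxx.
have -> : \sum_(k | k != j)
    (if k == j then u else - (w * (q k %/ dgcd q j)%:R))%:~R *: v k
    = (w%:~R / (dgcd q j)%:R * (q j)%:R) *: v j.
  rewrite -scalerA -[RHS]opprK -scalerN -others -scaleNr scaler_sumr.
  apply: eq_bigr => k kj; rewrite (negbTE kj) scalerA; congr (_ *: _).
  rewrite rmorphN rmorphM rmorph_nat natr_div ?dgcd_dvdn ?unitfE ?dgcd_neq0 //.
  by ring.
rewrite -scalerDl; congr (_ *: _); apply: (mulIf (dgcd_neq0 j)).
by rewrite mulVf // -[LHS]uw1; field; exact: dgcd_neq0.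
Qed.

Lemma ray_generator_dgcd j :
  ray_generator (in_lattice v) (v j) ((dgcd q j)%:R^-1 *: v j).
Proof.
split; first exact: in_lattice_v_div_dgcd.
split; first by exists (dgcd q j)%:R^-1; rewrite ?invr_ge0 ?ler0n.
move=> x Lx [t t_ge0 xt]; rewrite xt in Lx.
have /intrP[m tm] := in_lattice_ray Lx.
have m_ge0 : 0 <= m by rewrite -(ler0z rat) -tm mulr_ge0.
exists `|m|%N; rewrite xt scalerA pmulrn gez0_abs // -tm.
by rewrite -mulrA mulfV ?mulr1.
Qed.

Lemma ray_generator_eq j w :
  ray_generator (in_lattice v) (v j) w -> w = (dgcd q j)%:R^-1 *: v j.
Proof.
move=> [Lw [[t _ wt] w_gen]].
have /intrP[m tm] : t * (dgcd q j)%:R \is a Num.int.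
  by apply: in_lattice_ray; rewrite -wt.
have [|k dk] := w_gen _ (in_lattice_v_div_dgcd j).
  by exists (dgcd q j)%:R^-1; rewrite ?invr_ge0 ?ler0n.
have : ((dgcd q j)%:R^-1 - k%:R * t) *: v j = 0.
  by rewrite scalerBl -scalerA -wt -dk subrr.
move=> /eqP; rewrite scaler_eq0 (negbTE (v_neq0 j)) orbF subr_eq0 => /eqP dkt.
have /eqP : m * k%:Z = 1.
  apply: (@intr_inj rat); rewrite rmorphM /= -tm -pmulrn mulrAC [t * _]mulrC.
  by rewrite -dkt mulVf.
rewrite intUnitRing.mulzn_eq1 => /andP[/eqP m1 _].
by rewrite wt -[t](mulfK (dgcd_neq0 j)) tm m1 mul1r.
Qed.

Section RayGenerators.
Variable nv : 'I_n.+1 -> 'rV[rat]_n.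
Hypothesis nv_gen : forall j, ray_generator (in_lattice v) (v j) (nv j).

Let nvE j : nv j = (dgcd q j)%:R^-1 *: v j := ray_generator_eq (nv_gen j).

Lemma v_eq_dgcd_scale j : v j = (dgcd q j)%:R *: nv j.
Proof. by rewrite nvE scalerA mulfV ?scale1r. Qed.

Lemma in_lattice_ray_generatorsE x : in_lattice v x <-> in_lattice nv x.
Proof.
split=> [[c ->]|[c ->]]; last first.
  by apply: in_lattice_comb => k; rewrite nvE; exact: in_lattice_v_div_dgcd.
exists (fun k => c k * (dgcd q k)%:Z); apply: eq_bigr => k _.
by rewrite nvE scalerA rmorphM /= -pmulrn mulfK.
Qed.

Lemma spans_ray_generators : spans_Qn nv.
Proof.
move=> x; have [c ->] := v_span x; exists (fun k => c k * (dgcd q k)%:R).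
by apply: eq_bigr => k _; rewrite nvE scalerA mulfK.
Qed.

Lemma reduction_relation : \sum_j (reduction q j)%:R *: nv j = 0.
Proof.
pose D := (\big[lcmn/1%N]_(k < n.+1) dgcd q k)%N.
have red j : (reduction q j)%:R *: nv j = D%:R^-1 *: ((q j)%:R *: v j).
  have a_neq0 : (alcm q j)%:R != 0 :> rat by rewrite pnatr_eq0 -lt0n alcm_gt0.
  rewrite nvE !scalerA /reduction natr_div ?alcm_dvdn ?unitfE //.
  rewrite /D (biglcmn_dgcd j) natrM.
  by congr (_ *: _); field; rewrite a_neq0 dgcd_neq0.
by rewrite (eq_bigr _ (fun j _ => red j)) -scaler_sumr v_rel scaler0.
Qed.

End RayGenerators.

Lemma ray_generators_weights :
  (exists nv : 'I_n.+1 -> 'rV[rat]_n,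
     forall j, ray_generator (in_lattice v) (v j) (nv j)) /\
  (forall nv : 'I_n.+1 -> 'rV[rat]_n,
     (forall j, ray_generator (in_lattice v) (v j) (nv j)) ->
     (forall j, v j = (dgcd q j)%:R *: nv j) /\
     (forall x, in_lattice v x <-> in_lattice nv x) /\
     spans_Qn nv /\
     \sum_(j < n.+1) (reduction q j)%:R *: nv j = 0).
Proof.
split=> [|nv nv_gen].
  by exists (fun j => (dgcd q j)%:R^-1 *: v j); exact: ray_generator_dgcd.
split; first exact: v_eq_dgcd_scale.
split; first exact: in_lattice_ray_generatorsE.
by split; [exact: spans_ray_generators | exact: reduction_relation].
Qed.

End PositiveDimension.
End WeightedFamily.

Lemma rV0_eq (R : Type) (x y : 'rV[R]_0) : x = y.
Proof. by apply/matrixP => i []. Qed.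

Theorem mainTheorem3 (n : nat) (q : 'I_n.+1 -> nat)
  (v : 'I_n.+1 -> 'rV[rat]_n) :
  weights_vector q ->
  spans_Qn v ->
  \sum_(j < n.+1) (q j)%:R *: v j = 0 ->
  let L := in_lattice v in
  let L' := in_lattice (fun j => (q j)%:R *: v j) in
  (* (a) *)
  lattice_index L L' (\prod_(j < n.+1) q j)%N /\
  (* (b) *)
  (forall (e : 'I_n -> 'rV[rat]_n) (V : 'M[int]_(n, n.+1)),
     lattice_basis L e ->
     (forall j, v j = \sum_(i < n) (V i j)%:~R *: e i) ->
     exists eps : bool, forall j : 'I_n.+1,
       \det (col' j V) = (-1) ^+ (eps + j) * (q j)%:Z) /\
  (* (c) *)
  (exists nv : 'I_n.+1 -> 'rV[rat]_n,
     forall j, ray_generator L (v j) (nv j)) /\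
  (forall nv : 'I_n.+1 -> 'rV[rat]_n,
     (forall j, ray_generator L (v j) (nv j)) ->
     (forall j, v j = (dgcd q j)%:R *: nv j) /\
     (forall x, L x <-> in_lattice nv x) /\
     spans_Qn nv /\
     \sum_(j < n.+1) (reduction q j)%:R *: nv j = 0).
Proof.
move=> q_weights v_span v_rel /=.
split; first exact: lattice_index_weights.
split; first by move=> e V; exact: det_col'_weights.
case: n q v q_weights v_span v_rel => [|n] q v q_weights v_span v_rel.
  have L0 m (w : 'I_m -> 'rV[rat]_0) x : in_lattice w x.
    by exists (fun=> 0); exact: rV0_eq.
  split=> [|nv _].
    exists (fun=> 0) => j; split; first exact: L0.
    split=> [|x _ _]; first by exists 0 => //; exact: rV0_eq.
    by exists 0%N; exact: rV0_eq.
  split=> [j|]; first exact: rV0_eq.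
  split=> [x|]; first by split=> _; exact: L0.
  by split=> [x|]; [exists (fun=> 0) |]; exact: rV0_eq.
exact: ray_generators_weights.
Qed.
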